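(* Let $\mathbf p$ be a Nash-routing of a max game on a graph with $n\ge2$ nodes, with $C=C(\mathbf p)$ and $D=D(\mathbf p)$, and let $\mathbf p^*$ be an optimal routing. Let $Z$ be the set of all edges $e$ with $C_e(\mathbf p)\ge C-2\lg n$. If $C\ge D+2\lg n+2$, then there is a nonempty set of edges $X\subseteq Z$ such that $|f(X)|\le 2|X|$.
   Context: A routing game $(\mathbf N,G,\mathcal P)$: players $\{1,\dots,N\}$ ($N\ge1$), a simple graph $G=(V,E)$ with $n=|V|$ nodes (so fewer than $n^2$ edges), and for each player $i$ a nonempty finite set $\mathcal P_i$ of paths from $u_i$ to $v_i$. A routing is $\mathbf p=[p_1,\dots,p_N]$, $p_i\in\mathcal P_i$. $C_e(\mathbf p)$ = number of players whose path uses edge $e$; $C_i(\mathbf p)=\max_{e\in p_i}C_e(\mathbf p)$; $D_i(\mathbf p)=|p_i|$; $C(\mathbf p)=\max_eC_e(\mathbf p)$; $D(\mathbf p)=\max_i|p_i|$. Max game: $pc_i=\max(C_i,D_i)$, $SC=\max(C,D)$. A Nash-routing is one where no player can strictly lower $pc_i$ by unilaterally changing its path within $\mathcal P_i$; an optimal routing $\mathbf p^*=[p_1^*,\dots,p_N^*]$ minimizes $SC$. $\lg=\log_2$. $\Pi_e(\mathbf p)$ is the set of players $i$ with $e\in p_i$. $H$ is the set of edges $e$ with $C_e(\mathbf p)\ge D+2$. For $e\in H$ and $i\in\Pi_e(\mathbf p)$, $f(e,i)=\{e'\in p_i^*: C_{e'}(\mathbf p)\ge C_e(\mathbf p)-1\}$;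 $f(e)=\bigcup_{i\in\Pi_e(\mathbf p)}f(e,i)$; for $X\subseteq H$, $f(X)=\bigcup_{e\in X}f(e)$. *)

From mathcomp Require Import all_boot.
Set Implicit Arguments. Unset Strict Implicit. Unset Printing Implicit Defensive.

Section Routing.
Variables (V : finType) (adj : rel V) (N : nat).

Definition is_path_from (u v : V) (q : seq V) : bool :=
  match q with
  | [::] => false
  | x :: s => [&& x == u, path adj x s, last x s == v & uniq q]
  end.

Definition pedges (q : seq V) : seq {set V} :=
  [seq [set xy.1; xy.2] | xy <- zip q (behead q)].

Definition plen (q : seq V) : nat := (size q).-1.

Definition routing := 'I_N -> seq V.

Definition Ce (r : routing) (e : {set V}) : nat :=
  #|[set i : 'I_N | e \in pedges (r i)]|.

Definition Ci (r : routing) (i : 'I_N) : nat := \max_(e <- pedges (r i)) Ce r e.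
Definition Di (r : routing) (i : 'I_N) : nat := plen (r i).
Definition Cong (r : routing) : nat := \max_(e : {set V}) Ce r e.
Definition Dil (r : routing) : nat := \max_(i < N) plen (r i).

Definition pc (r : routing) (i : 'I_N) : nat := maxn (Ci r i) (Di r i).
Definition SC (r : routing) : nat := maxn (Cong r) (Dil r).

Definition valid (P : 'I_N -> seq (seq V)) (r : routing) : Prop :=
  forall i, r i \in P i.

Definition upd (r : routing) (i : 'I_N) (q : seq V) : routing :=
  fun j => if j == i then q else r j.

Definition is_Nash (P : 'I_N -> seq (seq V)) (r : routing) : Prop :=
  valid P r /\
  forall i q, q \in P i -> pc r i <= pc (upd r i q) i.

Definition is_optimal (P : 'I_N -> seq (seq V)) (r : routing) : Prop :=
  valid P r /\ forall r', valid P r' -> SC r <= SC r'.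

Definition f_ei (p ps : routing) (e : {set V}) (i : 'I_N) : {set {set V}} :=
  [set e' | (e' \in pedges (ps i)) && (Ce p e - 1 <= Ce p e')].

Definition f_e (p ps : routing) (e : {set V}) : {set {set V}} :=
  \bigcup_(i | e \in pedges (p i)) f_ei p ps e i.

Definition f_X (p ps : routing) (X : {set {set V}}) : {set {set V}} :=
  \bigcup_(e in X) f_e p ps e.

End Routing.

From mathcomp Require Import all_boot zify.

Set Implicit Arguments.
Unset Strict Implicit.

(* Call an edge set X expanding when
   |f(X)| > 2|X|.  Let L_j be the set of edges whose congestion is within j
   of the maximum C, so L_0 is nonempty.  Since every edge of f(e) has
   congestion at least C_e - 1, we get f(L_j) ⊆ L_(j+1).  If L_0, ..., L_k
   were all expanding, the chain  |f(L_j)| > 2|L_j| >= 2|f(L_(j-1))|  would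
   force |f(L_k)| >= 2^(k+1).  But f(X) consists of edges {x,y}, of which
   there are at most n^2, so for k = floor(lg n^2) some L_j with j <= k is
   not expanding; as 2^j <= n^2 this L_j lies inside Z and is the required X. *)

Section Growth.
Variables (T : finType) (F : {set T} -> {set T}) (S : nat -> {set T}).
Hypotheses (S0_ne : S 0 != set0) (F_chain : forall j, F (S j) \subset S j.+1).

Lemma expanding_chain_growth (k : nat) :
  (forall j, j <= k -> 2 * #|S j| < #|F (S j)|) ->
  forall j, j <= k -> 2 ^ j.+1 <= #|F (S j)|.
Proof.
move=> expand; elim=> [|j IHj] lejk.
  have S0_pos : 0 < #|S 0| by rewrite card_gt0.
  apply: ltnW; apply: leq_trans (expand 0 lejk); rewrite expn1; lia.
have grow_j : 2 ^ j.+1 <= #|S j.+1|.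
  exact: leq_trans (IHj (ltnW lejk)) (subset_leq_card (F_chain j)).
apply: ltnW; apply: leq_trans (expand _ lejk).
by rewrite expnS ltnS leq_mul2l.
Qed.

Lemma non_expanding_level (k : nat) :
  #|F (S k)| < 2 ^ k.+1 ->
  exists2 j, j <= k & #|F (S j)| <= 2 * #|S j|.
Proof.
move=> small.
have [/existsP [j non_exp] | all_exp] :=
  boolP [exists j : 'I_k.+1, #|F (S j)| <= 2 * #|S j|].
  by exists j; first by rewrite -ltnS.
suff expand : forall j, j <= k -> 2 * #|S j| < #|F (S j)|.
  by have := expanding_chain_growth expand (leqnn k); rewrite leqNgt small.
move=> j lejk; rewrite ltnNge; apply: contraNN all_exp => non_exp.
by apply/existsP; exists (Ordinal (lejk : j < k.+1)).
Qed.

End Growth.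

Section Levels.
Variables (V : finType) (N : nat) (p ps : routing V N).

(* f(X) consists of edges {x,y} of the optimal routing, so |f(X)| <= n^2. *)
Lemma card_f_X_le (X : {set {set V}}) : #|f_X p ps X| <= #|V| ^ 2.
Proof.
have f_X_pairs : f_X p ps X \subset [set [set xy.1; xy.2] | xy in [set: V * V]].
  apply/subsetP => e' /bigcupP [e _ /bigcupP [i _]].
  by rewrite inE => /andP [/mapP [xy _ ->] _]; apply: imset_f; rewrite inE.
apply: leq_trans (subset_leq_card f_X_pairs) _.
apply: leq_trans (leq_imset_card _ _) _.
by rewrite cardsT card_prod expnS expn1.
Qed.

Definition level (j : nat) : {set {set V}} :=
  [set e | Cong p - Ce p e <= j].

(* A maximally congested edge lies in every level. *)
Lemma level_nonempty (j : nat) : level j != set0.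
Proof.
have edges_pos : 0 < #|{set V}| by apply/card_gt0P; exists set0.
have [e0 max_e0] := eq_bigmax (Ce p) edges_pos.
by apply/set0Pn; exists e0; rewrite inE /Cong max_e0 subnn.
Qed.

(* Edges of f(e) have congestion at least C_e - 1, so f(L_j) ⊆ L_(j+1). *)
Lemma f_X_level (j : nat) : f_X p ps (level j) \subset level j.+1.
Proof.
apply/subsetP => e' /bigcupP [e]; rewrite inE => e_lvl /bigcupP [i _].
by rewrite !inE => /andP [_ close]; lia.
Qed.

Lemma level_sub_Z (j : nat) :
  2 ^ j <= #|V| ^ 2 ->
  level j \subset [set e : {set V} | 2 ^ (Cong p - Ce p e) <= #|V| ^ 2].
Proof.
move=> small_j; apply/subsetP => e; rewrite !inE => e_lvl.
by apply: leq_trans small_j; rewrite leq_exp2l.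
Qed.

End Levels.

Unset Implicit Arguments.

Theorem mainTheorem4 (V : finType) (adj : rel V) (N : nat)
  (adj_sym : symmetric adj) (adj_irr : irreflexive adj)
  (n2 : 2 <= #|V|) (N1 : 1 <= N)
  (u v : 'I_N -> V) (P : 'I_N -> seq (seq V))
  (P_ne : forall i, P i != [::])
  (P_path : forall i q, q \in P i -> is_path_from adj (u i) (v i) q)
  (p ps : routing V N)
  (p_Nash : is_Nash P p) (ps_opt : is_optimal P ps)
  (hC : Dil p + 2 <= Cong p /\ #|V| ^ 2 <= 2 ^ (Cong p - Dil p - 2)) :
  let Z := [set e : {set V} | 2 ^ (Cong p - Ce p e) <= #|V| ^ 2] in
  exists X : {set {set V}},
    [/\ X != set0, X \subset Z & #|f_X p ps X| <= 2 * #|X| ].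
Proof.
move=> Z.
have n2_pos : 0 < #|V| ^ 2 by rewrite expn_gt0 (leq_trans _ n2).
pose k := trunc_log 2 (#|V| ^ 2).
have small : #|f_X p ps (level p k)| < 2 ^ k.+1.
  exact: leq_ltn_trans (card_f_X_le p ps _) (trunc_log_ltn _ _).
have [j lejk non_exp] :=
  non_expanding_level (level_nonempty p 0) (f_X_level p ps) small.
exists (level p j); split=> //; first exact: level_nonempty.
apply: level_sub_Z; apply: leq_trans (trunc_logP (isT : 1 < 2) n2_pos).
by rewrite leq_exp2l.
Qed.
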